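(* Let $A$ be a matching in $K_{2n}$ and let $M$ be uniformly random among perfect matchings of $K_{2n}$ containing $A$. Apply the following procedure $r_A$: set $A':=A$, $M':=M$; while $A'\ne\emptyset$: pick any $(u,v)\in A'$; pick an edge of $M'\setminus A'$ uniformly at random and order its endpoints uniformly at random as $(x,y)$; with probability $1-\frac1{2|M'\setminus A'|+1}$ replace the edges $\{u,v\},\{x,y\}$ in $M'$ by $\{u,y\},\{v,x\}$; then remove $(u,v)$ from $A'$. Output $M'$. Then $r_A(M)$ is a uniformly random perfect matching of $K_{2n}$. Moreover, for every perfect matching $M\supseteq A$, every edge of $r_A(M)$ not in $M$ is incident to a vertex covered by $A$; in particular, if $B$ is an edge set with $A\cup B$ a matching and $B\not\subseteq M$, then $B\not\subseteq r_A(M)$.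
   Context: (When $M'\setminus A'=\emptyset$ the replacement step happens with probability $0$.) *)

From HB Require Import structures.
From mathcomp Require Import all_boot all_order all_algebra.
Set Implicit Arguments. Unset Strict Implicit. Unset Printing Implicit Defensive.
Import Order.TTheory GRing.Theory Num.Theory.
Local Open Scope ring_scope.

Section Defs.
Variable V : finType.

Definition matching (E : {set {set V}}) : bool :=
  [forall e in E, #|e| == 2%N] &&
  [forall e in E, forall f in E, (e != f) ==> [disjoint e & f]].

Definition perfect (E : {set {set V}}) : bool :=
  matching E && [forall x, exists e in E, x \in e].

Definition covered (A : {set {set V}}) (x : V) : bool := [exists e in A, x \in e].

Definition swapM (M : {set {set V}}) (u v x y : V) : {set {set V}} :=
  ((M :\ [set u; v]) :\ [set x; y]) :|: [set [set u; y]; [set v; x]].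

(* Distribution of the output of the procedure r_A, started from state
   (A', M'), with fuel k; [rA pick k A' M' N] is the probability that the
   output equals N.  [pick A' M'] is the (arbitrary, state-dependent) choice
   of an oriented edge (u,v) of A'. *)
Fixpoint rA (pick : {set {set V}} -> {set {set V}} -> V * V) (k : nat)
  (A' M' N : {set {set V}}) {struct k} : rat :=
  match k with
  | 0 => (N == M')%:R
  | k'.+1 =>
    if A' == set0 then (N == M')%:R else
    let u := (pick A' M').1 in
    let v := (pick A' M').2 in
    let A'' := A' :\ [set u; v] in
    let R := M' :\: A' in
    let m := #|R| in
    if m == 0%N then rA pick k' A'' M' N else
    let p : rat := 1 - 1 / (2 * m + 1)%N%:R in
    \sum_(e in R) \sum_(x in e) \sum_(y in e | y != x)
       (1 / (2 * m)%N%:R) *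
       (p * rA pick k' A'' (swapM M' u v x y) N + (1 - p) * rA pick k' A'' M' N)
  end.

End Defs.

From HB Require Import structures.
From mathcomp Require Import all_boot all_order all_algebra.
From mathcomp Require Import ring.
Set Implicit Arguments. Unset Strict Implicit. Unset Printing Implicit Defensive.
Import Order.TTheory GRing.Theory Num.Theory.

(* Encode a perfect matching by its partner function, a fixed-point-free
   involution.  From a perfect matching M containing the current edge set B, the
   step of r_A along {u,v} goes, with probability 1/(2m+1) each, to M and to the
   2m matchings obtained by a swap.  These 2m+1 matchings are exactly the
   preimages of M under [insert_edge u v], which makes {u,v} an edge and pairs
   the old partners of u and v.  So the step is the transpose of a map, scaled
   by a weight depending only on |B|.  Since the insert_edge maps along disjoint
   edges commute, so do the steps, and the output does not depend on the order
   in which r_A processes the edges of A.  Summing a step over all M containing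
   B gives the weight times the sum over matchings containing B minus {u,v};
   induction on |B| then yields uniformity.  A swap creates only edges through
   u or v, whence the support statement. *)

Ltac case_eqs :=
  repeat (match goal with
  | |- context[(?a == ?b)] =>
      lazymatch a with context[if _ then _ else _] => fail | _ => idtac end;
      lazymatch b with context[if _ then _ else _] => fail | _ => idtac end;
      case: (a =P b) => ?
  end; try (exfalso; congruence)).

Section Partner.
Variable V : finType.
Implicit Types (M B : {set {set V}}) (e f : {set V}).

Lemma matching_card B e : matching B -> e \in B -> #|e| = 2.
Proof. by case/andP=> /forall_inP cardB _ /cardB /eqP. Qed.

Lemma matching_edge_eq B e f x :
  matching B -> e \in B -> f \in B -> x \in e -> x \in f -> e = f.
Proof.
case/andP=> _ /forall_inP disjB eB fB xe xf; apply/eqP; apply: contraT => nef.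
have /forall_inP/(_ f fB) := disjB e eB; rewrite nef /= => /disjoint_setI0 ef0.
by have := in_set0 x; rewrite -ef0 inE xe xf.
Qed.

Lemma matchingS B B' : B' \subset B -> matching B -> matching B'.
Proof.
move=> sB'B /andP[/forall_inP cardB /forall_inP disjB]; apply/andP; split.
  by apply/forall_inP => e /(subsetP sB'B) /cardB.
apply/forall_inP => e /(subsetP sB'B) eB; apply/forall_inP => f /(subsetP sB'B) fB.
by have /forall_inP := disjB e eB; apply.
Qed.

Lemma perfect_matching M : perfect M -> matching M.
Proof. by case/andP. Qed.

Lemma set2_neq (a b : V) : #|[set a; b]| = 2 -> a != b.
Proof. by rewrite cards2; case: (a != b). Qed.

Lemma set2_eq_mem (a b c d : V) : [set a; b] = [set c; d] -> (a == c) || (a == d).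
Proof.
move=> abcd; have : a \in [set c; d] by rewrite -abcd set21.
by rewrite !inE.
Qed.

Lemma card2_set2 e x : #|e| = 2 -> x \in e -> exists y, y != x /\ e = [set x; y].
Proof.
move/eqP/cards2P=> [a [b [ab ->]]]; rewrite !inE => /orP[]/eqP->.
  by exists b; rewrite eq_sym.
by exists a; rewrite setUC.
Qed.

Definition partner M (z : V) : V := odflt z [pick y | [set z; y] \in M].

Lemma partner_edge M z : perfect M -> [set z; partner M z] \in M /\ partner M z != z.
Proof.
case/andP=> mM /forallP/(_ z)/exists_inP[e eM ze].
have [y [yz ey]] := card2_set2 (matching_card mM eM) ze.
rewrite /partner; case: pickP => [w wM|/(_ y)]; last by rewrite -ey eM.
split=> //=; apply/eqP => wz; move: (matching_card mM wM).
by rewrite wz setUid cards1.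
Qed.

Lemma edge_partner M e z : perfect M -> e \in M -> z \in e -> e = [set z; partner M z].
Proof.
move=> pM eM ze; have [zM _] := partner_edge z pM.
by apply: (matching_edge_eq (perfect_matching pM) eM zM ze); rewrite set21.
Qed.

Lemma partnerK M : perfect M -> involutive (partner M).
Proof.
move=> pM z; have [zM zn] := partner_edge z pM.
have zE := edge_partner pM zM (set22 _ _).
have : z \in [set partner M z; partner M (partner M z)] by rewrite -zE set21.
by rewrite !inE eq_sym (negbTE zn) eq_sym => /eqP.
Qed.

Lemma partner_neq M z : perfect M -> partner M z <> z.
Proof. by move=> pM; have [_ /eqP] := partner_edge z pM. Qed.

Lemma partner_memE M (s t : V) :
  perfect M -> s != t -> ([set s; t] \in M) = (partner M s == t).
Proof.
move=> pM st; apply/idP/eqP => [stM|<-]; last by case: (partner_edge s pM).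
have stE := edge_partner pM stM (set21 _ _).
have : t \in [set s; partner M s] by rewrite -stE set22.
by rewrite !inE eq_sym (negbTE st) => /eqP.
Qed.

Definition fpf_involution (f : V -> V) := involutive f /\ forall x, f x <> x.

Definition matching_of (f : V -> V) : {set {set V}} := [set [set z; f z] | z : V].

Lemma mem_matching_of (f : V -> V) e :
  (e \in matching_of f) = [exists z, e == [set z; f z]].
Proof.
apply/imsetP/existsP => [[z _ ->]|[z /eqP->]]; first by exists z.
by exists z.
Qed.

Lemma fpf_edge_eq (f : V -> V) z c :
  fpf_involution f -> c \in [set z; f z] -> [set z; f z] = [set c; f c].
Proof. by move=> [fK _]; rewrite !inE => /orP[]/eqP->; rewrite ?fK 1?setUC. Qed.

Lemma perfect_matching_of (f : V -> V) : fpf_involution f -> perfect (matching_of f).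
Proof.
move=> ff; have [fK fn] := ff.
apply/andP; split; last first.
  apply/forallP=> z; apply/exists_inP; exists [set z; f z]; last exact: set21.
  exact: imset_f.
apply/andP; split.
  apply/forall_inP=> e /imsetP[z _ ->]; rewrite cards2.
  by case: (z =P f z) => // zf; have := fn z; rewrite -zf.
apply/forall_inP=> e /imsetP[z _ ->]; apply/forall_inP=> e' /imsetP[w _ ->].
apply/implyP => ne; apply/pred0P => c /=; apply/negbTE/negP => /andP[cz cw].
by move: ne; rewrite (fpf_edge_eq ff cz) (fpf_edge_eq ff cw) eqxx.
Qed.

Lemma partner_matching_of (f : V -> V) : fpf_involution f -> partner (matching_of f) =1 f.
Proof.
move=> ff z; have pM := perfect_matching_of ff; have [fK fn] := ff.
have zM : [set z; f z] \in matching_of f by apply: imset_f.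
have zE := edge_partner pM zM (set21 _ _).
have : f z \in [set z; partner (matching_of f) z] by rewrite -zE set22.
by rewrite !inE => /orP[/eqP fzz|/eqP //]; have := fn z; rewrite fzz.
Qed.

Lemma fpf_partner M : perfect M -> fpf_involution (partner M).
Proof. by move=> pM; split=> [|x]; [apply: partnerK | apply: partner_neq]. Qed.

Lemma matching_of_partner M : perfect M -> M = matching_of (partner M).
Proof.
move=> pM; apply/setP => e; apply/idP/imsetP => [eM|[z _ ->]].
  have /eqP/cards2P[a [b [_ eab]]] := matching_card (perfect_matching pM) eM.
  by exists a => //; apply: (edge_partner pM eM); rewrite eab set21.
by case: (partner_edge z pM).
Qed.

Lemma eq_matching_of (f g : V -> V) : f =1 g -> matching_of f = matching_of g.
Proof. by move=> fg; apply: eq_imset => z; rewrite fg. Qed.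

Lemma perfect_partner_inj M M' :
  perfect M -> perfect M' -> partner M =1 partner M' -> M = M'.
Proof.
move=> pM pM' MM'.
by rewrite (matching_of_partner pM) (matching_of_partner pM') (eq_matching_of MM').
Qed.

End Partner.

Section Rewiring.
Variable V : finType.
Implicit Types (M B : {set {set V}}) (p : V -> V).

Definition swap_fun p (u v x y z : V) : V :=
  if z == u then y else if z == y then u else if z == v then x
  else if z == x then v else p z.

Definition insert_fun p (u v z : V) : V :=
  if z == u then v else if z == v then u else if z == p u then p v
  else if z == p v then p u else p z.

Lemma fpf_swap_fun p u v x y : fpf_involution p -> p u = v -> p x = y ->
  x <> u -> x <> v -> fpf_involution (swap_fun p u v x y).
Proof.
move=> [pK pn] pu px xu xv.
have := pK u; have := pK v; have := pK x; have := pK y.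
have := pn u; have := pn v; have := pn x; have := pn y.
by move=> *; split=> z; have := pK z; have := pn z; move=> *;
  rewrite /swap_fun; case_eqs; congruence.
Qed.

Lemma fpf_insert_fun p u v : fpf_involution p -> u <> v ->
  fpf_involution (insert_fun p u v).
Proof.
move=> [pK pn] uv.
have := pK u; have := pK v; have := pK (p u); have := pK (p v).
have := pn u; have := pn v; have := pn (p u); have := pn (p v).
by move=> *; split=> z; have := pK z; have := pn z; move=> *;
  rewrite /insert_fun; case_eqs; congruence.
Qed.

Lemma insert_fun_id p u v : fpf_involution p -> p u = v -> insert_fun p u v =1 p.
Proof.
move=> [pK pn] pu z.
have := pK u; have := pK v; have := pK z; have := pn u; have := pn v; have := pn z.
by move=> *; rewrite /insert_fun; case_eqs; congruence.
Qed.

Lemma insert_funC p u v : fpf_involution p -> u <> v -> insert_fun p v u =1 insert_fun p u v.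
Proof.
move=> [pK pn] uv z; have := pK u; have := pK v; have := pn u; have := pn v.
by move=> *; rewrite /insert_fun; case_eqs; congruence.
Qed.

Lemma insert_fun_comm p u v s t : fpf_involution p ->
  u <> v -> u <> s -> u <> t -> v <> s -> v <> t -> s <> t ->
  insert_fun (insert_fun p s t) u v =1 insert_fun (insert_fun p u v) s t.
Proof.
move=> [pK pn] uv us ut vs vt st z.
have := pK u; have := pK v; have := pK s; have := pK t; have := pK z.
have := pn u; have := pn v; have := pn s; have := pn t; have := pn z.
by move=> *; rewrite /insert_fun; case_eqs; congruence.
Qed.

Lemma insert_fun_swap_fun p u v x : fpf_involution p -> p u = v ->
  x <> u -> x <> v -> insert_fun (swap_fun p u v x (p x)) u v =1 p.
Proof.
move=> [pK pn] pu xu xv z.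
have := pK u; have := pK v; have := pK x; have := pK z;
have := pn u; have := pn v; have := pn x; have := pn z.
by move=> *; rewrite /insert_fun /swap_fun; case_eqs; congruence.
Qed.

Lemma swap_fun_insert_fun p u v : fpf_involution p -> p u <> v -> u <> v ->
  swap_fun (insert_fun p u v) u v (p v) (insert_fun p u v (p v)) =1 p.
Proof.
move=> [pK pn] pu uv z.
have := pK u; have := pK v; have := pK z; have := pn u; have := pn v; have := pn z.
by move=> *; rewrite /insert_fun /swap_fun; case_eqs; congruence.
Qed.

Lemma swap_fun_out p u v x y z :
  z <> u -> z <> v -> z <> x -> z <> y -> swap_fun p u v x y z = p z.
Proof. by move=> *; rewrite /swap_fun; case_eqs. Qed.

Lemma insert_fun_out p u v z :
  z <> u -> z <> v -> z <> p u -> z <> p v -> insert_fun p u v z = p z.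
Proof. by move=> *; rewrite /insert_fun; case_eqs. Qed.

Lemma eq_insert_fun p q u v : p =1 q -> insert_fun p u v =1 insert_fun q u v.
Proof. by move=> pq z; rewrite /insert_fun !pq. Qed.

End Rewiring.

Section Swaps.
Variable V : finType.
Implicit Types (M B : {set {set V}}) (p : V -> V).

Lemma fpf_set2_eq p z a : fpf_involution p ->
  ([set z; p z] == [set a; p a]) = (z == a) || (z == p a).
Proof.
move=> [pK _]; apply/eqP/idP => [/set2_eq_mem //|/orP[]/eqP->//].
by rewrite pK setUC.
Qed.

Lemma swapM_matching_of M u v x y : perfect M -> partner M u = v -> partner M x = y ->
  x <> u -> x <> v -> swapM M u v x y = matching_of (swap_fun (partner M) u v x y).
Proof.
move=> pM pu px xu xv; have fp := fpf_partner pM; have [pK pn] := fp.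
set p := partner M in pu px pK pn fp *; set q := swap_fun p u v x y.
have yu : y <> u by move=> yu; apply: xv; rewrite -(pK x) px yu pu.
have yv : y <> v by move=> yv; apply: xu; rewrite -(pK x) px yv -pu pK.
have fq : fpf_involution q by apply: fpf_swap_fun.
have qu : q u = y by rewrite /q /swap_fun eqxx.
have qv : q v = x by rewrite /q /swap_fun; case_eqs.
apply/setP => e; rewrite mem_matching_of /swapM !inE.
apply/idP/existsP => [/orP[/and3P[exy euv eM]|/orP[]/eqP->]|[z /eqP->]].
- rewrite (matching_of_partner pM) mem_matching_of in eM.
  case/existsP: eM => z /eqP ez; subst e; exists z.
  move: exy euv; rewrite -/p -{1}px -{1}pu !fpf_set2_eq // pu px.
  by move=> /norP[/eqP zx /eqP zy] /norP[/eqP zu /eqP zv]; rewrite /q swap_fun_out.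
- by exists u; rewrite qu.
- by exists v; rewrite qv.
have [zuy|zuy] := boolP (z \in [set u; q u]).
  by rewrite -(fpf_edge_eq fq zuy) qu eqxx !orbT.
have [zvx|zvx] := boolP (z \in [set v; q v]).
  by rewrite -(fpf_edge_eq fq zvx) qv eqxx !orbT.
move: zuy zvx; rewrite qu qv !inE => /norP[/eqP zu /eqP zy] /norP[/eqP zv /eqP zx].
have zpz : z != p z by apply/eqP => zpz; apply: (pn z); rewrite -zpz.
rewrite /q swap_fun_out //; apply/orP; left.
rewrite -px -pu !fpf_set2_eq // pu px partner_memE // -/p eqxx andbT !negb_or.
by case_eqs.
Qed.

Lemma swapM_new_edge M u v x y e : e \in swapM M u v x y -> e \notin M ->
  (u \in e) || (v \in e).
Proof.
by rewrite /swapM !inE => /orP[/and3P[_ _ ->]//|/orP[]/eqP->] _; rewrite set21 ?orbT.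
Qed.

Definition insert_edge (u v : V) M : {set {set V}} :=
  if partner M u == v then M else swapM M u (partner M u) (partner M v) v.

Lemma insert_edge_matching_of M u v : perfect M -> u <> v ->
  insert_edge u v M = matching_of (insert_fun (partner M) u v).
Proof.
move=> pM uv; have [pK pn] := fpf_partner pM.
rewrite /insert_edge; case: eqP => [pu|pu].
  by rewrite {1}(matching_of_partner pM); apply: eq_matching_of => z; rewrite insert_fun_id.
rewrite swapM_matching_of //.
- by move=> pvu; apply: pu; rewrite -pvu pK.
- by move=> pvpu; apply: uv; rewrite -(pK u) -pvpu pK.
Qed.

Lemma perfect_insert_edge M u v : perfect M -> u <> v -> perfect (insert_edge u v M).
Proof.
move=> pM uv; rewrite insert_edge_matching_of //.
by apply/perfect_matching_of/fpf_insert_fun => //; apply: fpf_partner.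
Qed.

Lemma partner_insert_edge M u v : perfect M -> u <> v ->
  partner (insert_edge u v M) =1 insert_fun (partner M) u v.
Proof.
move=> pM uv; rewrite insert_edge_matching_of //.
by apply/partner_matching_of/fpf_insert_fun => //; apply: fpf_partner.
Qed.

Lemma insert_edgeC M u v : perfect M -> u <> v -> insert_edge v u M = insert_edge u v M.
Proof.
move=> pM uv; rewrite !insert_edge_matching_of //; last by move/esym.
by apply: eq_matching_of; apply: insert_funC => //; apply: fpf_partner.
Qed.

Lemma insert_edge_comm M u v s t : perfect M ->
  u <> v -> u <> s -> u <> t -> v <> s -> v <> t -> s <> t ->
  insert_edge u v (insert_edge s t M) = insert_edge s t (insert_edge u v M).
Proof.
move=> pM uv us ut vs vt st.
rewrite insert_edge_matching_of ?perfect_insert_edge //.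
rewrite [RHS]insert_edge_matching_of ?perfect_insert_edge //; apply: eq_matching_of => z.
rewrite (eq_insert_fun _ _ (partner_insert_edge pM st)).
rewrite (eq_insert_fun _ _ (partner_insert_edge pM uv)).
exact: insert_fun_comm (fpf_partner pM) uv us ut vs vt st z.
Qed.

End Swaps.

Section Extensions.
Variable V : finType.
Implicit Types (M B : {set {set V}}).

Definition uncovered B := [set x | ~~ covered B x].

Definition perfect_ext B := [set M : {set {set V}} | perfect M && (B \subset M)].

Lemma covered_mem B b x : b \in B -> x \in b -> covered B x.
Proof. by move=> bB xb; apply/exists_inP; exists b. Qed.

Lemma cover_setD_perfect M B : perfect M -> B \subset M -> cover (M :\: B) = uncovered B.
Proof.
move=> pM sBM; apply/setP => x; rewrite inE; apply/bigcupP/idP.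
  move=> [e /setDP[eM eB] xe]; apply/negP => /exists_inP[b bB xb].
  by move: eB; rewrite (matching_edge_eq (perfect_matching pM) eM (subsetP sBM _ bB) xe xb) bB.
move=> xB; have [xM _] := partner_edge x pM; exists [set x; partner M x]; last exact: set21.
rewrite inE xM andbT; apply: contra xB => xB; exact: covered_mem xB (set21 _ _).
Qed.

Lemma trivIset_setD_perfect M B : perfect M -> trivIset (M :\: B).
Proof.
move=> pM; apply/trivIsetP => e f /setDP[eM _] /setDP[fM _] nef.
rewrite -setI_eq0; apply/set0Pn => [[x /setIP[xe xf]]].
by move: nef; rewrite (matching_edge_eq (perfect_matching pM) eM fM xe xf) eqxx.
Qed.

Lemma big_setD_perfect (R : Type) (idx : R) (op : Monoid.com_law idx) M B (F : V -> R) :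
  perfect M -> B \subset M ->
  \big[op/idx]_(e in M :\: B) \big[op/idx]_(x in e) F x = \big[op/idx]_(x in uncovered B) F x.
Proof.
move=> pM sBM.
by rewrite -(big_trivIset _ (trivIset_setD_perfect B pM)) (cover_setD_perfect pM sBM).
Qed.

Lemma card_uncovered M B : perfect M -> B \subset M -> #|uncovered B| = (2 * #|M :\: B|)%N.
Proof.
move=> pM sBM; rewrite -sum1_card -(big_setD_perfect _ (fun=> 1%N) pM sBM).
rewrite (eq_bigr (fun _ => 2%N)) ?sum_nat_const 1?mulnC // => e /setDP[eM _].
by rewrite sum1_card (matching_card (perfect_matching pM) eM).
Qed.

Lemma card_perfect M : perfect M -> (2 * #|M|)%N = #|V|.
Proof.
move=> pM; rewrite -[M]setD0 -(card_uncovered pM (sub0set M)).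
by apply: eq_card => x; rewrite !inE; apply/exists_inP => -[e]; rewrite inE.
Qed.

Lemma card_setD_perfect M B : perfect M -> B \subset M ->
  (2 * #|M :\: B|)%N = (#|V| - 2 * #|B|)%N.
Proof. by move=> pM sBM; rewrite cardsD (setIidPr sBM) mulnBr card_perfect. Qed.

Lemma partnerE M s t : perfect M -> [set s; t] \in M -> s != t -> partner M s = t.
Proof. by move=> pM stM st; apply/eqP; rewrite -partner_memE. Qed.

Lemma matching_setD1_neq B b u v s : matching B -> [set u; v] \in B ->
  b \in B :\ [set u; v] -> s \in b -> s <> u /\ s <> v.
Proof.
move=> mB uvB /setD1P[buv bB] sb; split=> su; subst s; move: buv.
  by rewrite (matching_edge_eq mB bB uvB sb (set21 _ _)) eqxx.
by rewrite (matching_edge_eq mB bB uvB sb (set22 _ _)) eqxx.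
Qed.

Lemma sub_matching_of B (q : V -> V) : matching B ->
  (forall s t, [set s; t] \in B -> s != t -> q s = t) -> B \subset matching_of q.
Proof.
move=> mB qB; apply/subsetP => b bB.
have /eqP/cards2P[s [t [st bst]]] := matching_card mB bB; subst b.
by rewrite -(qB s t bB st); apply: imset_f.
Qed.

Lemma insert_edge_ext B u v M2 : matching B -> [set u; v] \in B -> u != v ->
  M2 \in perfect_ext (B :\ [set u; v]) -> insert_edge u v M2 \in perfect_ext B.
Proof.
move=> mB uvB uv; rewrite !inE => /andP[pM2 sM2].
have [pK pn] := fpf_partner pM2; set p := partner M2 in pK pn *.
have uv' : u <> v by apply/eqP.
rewrite perfect_insert_edge // insert_edge_matching_of //.
apply: sub_matching_of => // s t stB st.
have [stuv|stuv] := eqVneq [set s; t] [set u; v].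
  have : s \in [set u; v] by rewrite -stuv set21.
  have : t \in [set u; v] by rewrite -stuv set22.
  by rewrite !inE => /orP[]/eqP tE /orP[]/eqP sE; subst s t;
    rewrite ?eqxx // in st; rewrite /insert_fun; case_eqs; congruence.
have stB' : [set s; t] \in B :\ [set u; v] by rewrite !inE stuv.
have ps : p s = t := partnerE pM2 (subsetP sM2 _ stB') st.
have [su sv] := matching_setD1_neq mB uvB stB' (set21 _ _).
have [tu tv] := matching_setD1_neq mB uvB stB' (set22 _ _).
rewrite insert_fun_out // -/p.
- by move=> spu; apply: tu; rewrite -ps spu pK.
- by move=> spv; apply: tv; rewrite -ps spv pK.
Qed.

Lemma cardsD1_in B b : b \in B -> #|B :\ b| = (#|B| - 1)%N.
Proof. by move=> bB; rewrite (cardsD1 b B) bB add1n subSS subn0. Qed.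

Lemma perfect_ext_neq0 B : matching B -> perfect_ext set0 != set0 -> perfect_ext B != set0.
Proof.
move=> mB P0; move: {2}#|B| (erefl #|B|) mB => k.
elim: k B => [|k IH] B cardB mB.
  by move/cards0_eq: cardB => ->.
have /set0Pn[b bB] : B != set0 by apply/set0Pn/card_gt0P; rewrite cardB.
have /eqP/cards2P[u [v [uv buv]]] := matching_card mB bB; subst b.
have cardB' : #|B :\ [set u; v]| = k by rewrite cardsD1_in // cardB subn1.
have /set0Pn[M2 M2B] := IH _ cardB' (matchingS (subsetDl _ _) mB).
by apply/set0Pn; exists (insert_edge u v M2); apply: insert_edge_ext.
Qed.

End Extensions.

Definition swap_at (V : finType) (M : {set {set V}}) (u v x : V) :=
  swapM M u v x (partner M x).

Section SwapAt.
Variable V : finType.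
Variables (B M : {set {set V}}) (u v : V).
Hypotheses (mB : matching B) (uvB : [set u; v] \in B) (uv : u != v)
  (pM : perfect M) (sBM : B \subset M).

Let p := partner M.
Let fp : fpf_involution p := fpf_partner pM.
Let pu : p u = v := partnerE pM (subsetP sBM _ uvB) uv.

Lemma uncovered_neq x : x \in uncovered B -> x <> u /\ x <> v.
Proof.
rewrite inE => xB; split=> xE; subst x; move/negP: xB; apply; apply: (covered_mem uvB).
  exact: set21.
exact: set22.
Qed.

Lemma swap_at_matching_of x : x \in uncovered B ->
  swap_at M u v x = matching_of (swap_fun p u v x (p x)).
Proof. by move=> /uncovered_neq[xu xv]; rewrite /swap_at swapM_matching_of. Qed.

Lemma fpf_swap_at x : x \in uncovered B -> fpf_involution (swap_fun p u v x (p x)).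
Proof. by move=> /uncovered_neq[xu xv]; apply: fpf_swap_fun. Qed.

Lemma perfect_swap_at x : x \in uncovered B -> perfect (swap_at M u v x).
Proof. by move=> xB; rewrite swap_at_matching_of //; apply/perfect_matching_of/fpf_swap_at. Qed.

Lemma partner_swap_at x : x \in uncovered B ->
  partner (swap_at M u v x) =1 swap_fun p u v x (p x).
Proof. by move=> xB; rewrite swap_at_matching_of //; apply/partner_matching_of/fpf_swap_at. Qed.

Lemma swap_at_ext x : x \in uncovered B -> B :\ [set u; v] \subset swap_at M u v x.
Proof.
move=> xB; have [xu xv] := uncovered_neq xB; have [pK _] := fp.
rewrite swap_at_matching_of //; apply: sub_matching_of; first exact: matchingS (subsetDl _ _) mB.
move=> s t /[dup] stB' /setD1P[_ stB] st; have ps : p s = t := partnerE pM (subsetP sBM _ stB) st.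
have [su sv] := matching_setD1_neq mB uvB stB' (set21 _ _).
have covx : covered B x -> False by move: xB; rewrite inE => /negP.
rewrite swap_fun_out // => sE; apply: covx; apply: (covered_mem stB).
  by rewrite -sE set21.
by rewrite -(pK x) -sE ps set22.
Qed.

Lemma insert_edge_swap_at x : x \in uncovered B -> insert_edge u v (swap_at M u v x) = M.
Proof.
move=> xB; have [xu xv] := uncovered_neq xB.
rewrite insert_edge_matching_of ?perfect_swap_at //; last exact/eqP.
rewrite [RHS](matching_of_partner pM); apply: eq_matching_of => z.
by rewrite (eq_insert_fun _ _ (partner_swap_at xB)) insert_fun_swap_fun.
Qed.

Lemma partner_swap_at_v x : x \in uncovered B -> partner (swap_at M u v x) v = x.
Proof.
move=> xB; have [xu xv] := uncovered_neq xB; have [pK pn] := fp.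
by rewrite partner_swap_at // /swap_fun; case_eqs; congruence.
Qed.

Lemma swap_at_neq x : x \in uncovered B -> swap_at M u v x != M.
Proof.
move=> xB; have [xu _] := uncovered_neq xB; apply/eqP => xM.
by apply: xu; rewrite -(partner_swap_at_v xB) xM -pu (partnerK pM).
Qed.

Lemma swap_at_inj : {in uncovered B &, injective (swap_at M u v)}.
Proof.
by move=> x y xB yB xy; rewrite -(partner_swap_at_v xB) -(partner_swap_at_v yB) xy.
Qed.

Lemma insert_edge_fiber M2 : M2 \in perfect_ext (B :\ [set u; v]) ->
  insert_edge u v M2 = M -> M2 != M ->
  partner M2 v \in uncovered B /\ M2 = swap_at M u v (partner M2 v).
Proof.
rewrite inE => /andP[pM2 sM2] M2M M2nM; have [pK pn] := fpf_partner pM2.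
set p2 := partner M2 in pK pn *.
have p2u : p2 u <> v.
  by move=> p2uv; move: M2nM; rewrite -M2M /insert_edge -/p2 p2uv eqxx eqxx.
have uv' : u <> v by apply/eqP.
have p2vu : p2 v <> u by move=> p2vu; apply: p2u; rewrite -p2vu pK.
have p2vB : p2 v \in uncovered B.
  rewrite inE; apply/negP => /exists_inP[b bB vb].
  have [buv|buv] := eqVneq b [set u; v].
    by move: vb; rewrite buv !inE => /orP[]/eqP; [|apply: pn].
  have bB' : b \in B :\ [set u; v] by rewrite !inE buv.
  have vb' : v \in b by rewrite (edge_partner pM2 (subsetP sM2 _ bB') vb) -/p2 pK set22.
  by have [_] := matching_setD1_neq mB uvB bB' vb'.
split=> //; apply: perfect_partner_inj => //; first exact: perfect_swap_at.
move=> z; rewrite partner_swap_at // /p -M2M.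
by rewrite -(swap_fun_insert_fun (fpf_partner pM2) p2u uv' z) /swap_fun !partner_insert_edge.
Qed.

Local Open Scope ring_scope.

Lemma sum_insert_edge_fiber (f : {set {set V}} -> rat) :
  \sum_(M2 in perfect_ext (B :\ [set u; v])) (insert_edge u v M2 == M)%:R * f M2 =
  f M + \sum_(x in uncovered B) f (swap_at M u v x).
Proof.
have MB' : M \in perfect_ext (B :\ [set u; v]).
  by rewrite inE pM (subset_trans (subsetDl _ _) sBM).
have uvM : insert_edge u v M = M.
  by rewrite /insert_edge (partnerE pM (subsetP sBM _ uvB) uv) eqxx.
rewrite (eq_bigr (fun M2 => if insert_edge u v M2 == M then f M2 else 0)); last first.
  by move=> M2 _; case: eqP; rewrite ?mul1r ?mul0r.
rewrite -big_mkcondr (bigD1 M) /= ?MB' ?uvM ?eqxx //; congr (_ + _).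
rewrite -(big_imset _ swap_at_inj); apply: eq_bigl => M2.
apply/idP/imsetP => [/andP[/andP[M2B /eqP M2M] M2nM]|[x xB ->]].
  by have [xB M2E] := insert_edge_fiber M2B M2M M2nM; exists (partner M2 v).
by rewrite inE perfect_swap_at ?swap_at_ext ?insert_edge_swap_at ?swap_at_neq ?eqxx.
Qed.

End SwapAt.

Local Open Scope ring_scope.

Section Step.
Variable V : finType.
Implicit Types (M B : {set {set V}}) (f : {set {set V}} -> rat).

Definition step B (u v : V) f M : rat :=
  if #|M :\: B| == 0%N then f M else
  \sum_(e in M :\: B) \sum_(x in e) \sum_(y in e | y != x)
   (1 / (2 * #|M :\: B|)%N%:R) *
   ((1 - 1 / (2 * #|M :\: B| + 1)%N%:R) * f (swapM M u v x y) +
    (1 - (1 - 1 / (2 * #|M :\: B| + 1)%N%:R)) * f M).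

Lemma rA_step pick k B M N : B != set0 ->
  rA pick k.+1 B M N = step B (pick B M).1 (pick B M).2
     (fun M2 => rA pick k (B :\ [set (pick B M).1; (pick B M).2]) M2 N) M.
Proof. by move=> /negbTE B0; rewrite /= B0. Qed.

(* 1 / (2m+1) for m = |M :\: B|, written without reference to M. *)
Definition step_weight B : rat := ((#|V| - 2 * #|B|).+1)%:R^-1.

Lemma sum_oriented_edges M B (G : V -> V -> rat) : perfect M -> B \subset M ->
  \sum_(e in M :\: B) \sum_(x in e) \sum_(y in e | y != x) G x y =
  \sum_(x in uncovered B) G x (partner M x).
Proof.
move=> pM sBM; rewrite -(big_setD_perfect _ _ pM sBM); apply: eq_bigr => e /setDP[eM _].
apply: eq_bigr => x xe; apply: big_pred1 => y /=.
rewrite (edge_partner pM eM xe) !inE; have [_ px] := partner_edge x pM.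
by case: (y =P x) => [->|_] /=; rewrite ?(negbTE px) ?andbT // eq_sym (negbTE px).
Qed.

Lemma step_uncovered B M u v f : perfect M -> B \subset M ->
  step B u v f M = step_weight B * (f M + \sum_(x in uncovered B) f (swap_at M u v x)).
Proof.
move=> pM sBM; rewrite /step /step_weight -(card_setD_perfect pM sBM).
have cardB := card_uncovered pM sBM; set m := #|M :\: B| in cardB *.
case: eqP => [m0|/eqP m0].
  have /cards0_eq-> : #|uncovered B| = 0%N by rewrite cardB m0.
  by rewrite m0 muln0 invr1 mul1r big_set0 addr0.
have : (2 * m != 0)%N by rewrite muln_eq0.
rewrite sum_oriented_edges //; move: (2 * m)%N cardB => k cardB k0.
rewrite (eq_bigr (fun x => k%:R^-1 * (1 - k.+1%:R^-1) * f (swap_at M u v x)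
                         + k%:R^-1 * k.+1%:R^-1 * f M)); last first.
  by move=> x _; rewrite /swap_at addn1; ring.
rewrite big_split /= -mulr_sumr sumr_const cardB -[X in _ + X = _]mulr_natr -addn1 natrD.
have k1 : k%:R + 1 != 0 :> rat by rewrite -(natrD _ _ 1) pnatr_eq0 addn1.
by field; rewrite pnatr_eq0 k0 k1.
Qed.

End Step.

Section BackStep.
Variable V : finType.
Implicit Types (M B : {set {set V}}) (f : {set {set V}} -> rat).

Definition back_step B (u v : V) f M : rat :=
  step_weight B *
  \sum_(M2 in perfect_ext (B :\ [set u; v])) (insert_edge u v M2 == M)%:R * f M2.

Lemma stepE B u v f M : matching B -> [set u; v] \in B -> u != v ->
  perfect M -> B \subset M -> step B u v f M = back_step B u v f M.
Proof.
by move=> mB uvB uv pM sBM; rewrite step_uncovered // /back_step sum_insert_edge_fiber.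
Qed.

Lemma back_step_set2 B u v u' v' f M : u != v -> [set u'; v'] = [set u; v] ->
  back_step B u' v' f M = back_step B u v f M.
Proof.
move=> uv uvE; rewrite /back_step uvE; congr (_ * _).
apply: eq_bigr => M2; rewrite inE => /andP[pM2 _].
have : u' \in [set u; v] by rewrite -uvE set21.
have : v' \in [set u; v] by rewrite -uvE set22.
rewrite !inE => /orP[]/eqP vE /orP[]/eqP uE; subst u' v' => //;
  try by have := cards2 u v; rewrite -uvE setUid cards1 uv.
by rewrite insert_edgeC //; apply/eqP.
Qed.

Lemma eq_back_step B u v f g M : {in perfect_ext (B :\ [set u; v]), f =1 g} ->
  back_step B u v f M = back_step B u v g M.
Proof. by move=> fg; rewrite /back_step; congr (_ * _); apply: eq_bigr => M2 /fg ->. Qed.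

Lemma sum_insert_edge_comp D M u v s t (g : {set {set V}} -> rat) :
  matching D -> [set s; t] \in D -> s != t ->
  \sum_(M1 in perfect_ext D) (insert_edge u v M1 == M)%:R *
    \sum_(M2 in perfect_ext (D :\ [set s; t])) (insert_edge s t M2 == M1)%:R * g M2 =
  \sum_(M2 in perfect_ext (D :\ [set s; t])) (insert_edge u v (insert_edge s t M2) == M)%:R * g M2.
Proof.
move=> mD stD st; under eq_bigr do rewrite mulr_sumr.
rewrite exchange_big /=; apply: eq_bigr => M2 M2D.
rewrite (bigD1 (insert_edge s t M2)) /=; last exact: insert_edge_ext.
rewrite eqxx mul1r big1 ?addr0 // => M1 /andP[_ /negbTE].
by rewrite eq_sym => ->; rewrite mul0r mulr0.
Qed.

Lemma setD1C B a b : B :\ a :\ b = B :\ b :\ a.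
Proof. by rewrite !setDDl setUC. Qed.

Lemma back_stepC B u v s t g M :
  matching B -> [set u; v] \in B -> [set s; t] \in B -> [set u; v] != [set s; t] ->
  u != v -> s != t ->
  back_step B u v (back_step (B :\ [set u; v]) s t g) M =
  back_step B s t (back_step (B :\ [set s; t]) u v g) M.
Proof.
move=> mB uvB stB uvst uv st.
have mBuv : matching (B :\ [set u; v]) by apply: matchingS mB; apply: subsetDl.
have mBst : matching (B :\ [set s; t]) by apply: matchingS mB; apply: subsetDl.
have stBuv : [set s; t] \in B :\ [set u; v] by rewrite !inE eq_sym uvst.
have uvBst : [set u; v] \in B :\ [set s; t] by rewrite !inE uvst.
have [su sv] := matching_setD1_neq mB uvB stBuv (set21 _ _).
have [tu tv] := matching_setD1_neq mB uvB stBuv (set22 _ _).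
rewrite /back_step.
have -> : step_weight (B :\ [set u; v]) = step_weight (B :\ [set s; t]).
  by rewrite /step_weight !cardsD1_in.
under eq_bigr do rewrite mulrCA; under [in RHS]eq_bigr do rewrite mulrCA.
rewrite -!mulr_sumr (sum_insert_edge_comp _ _ _ _ mBuv stBuv st).
rewrite (sum_insert_edge_comp _ _ _ _ mBst uvBst uv) setD1C; congr (_ * (_ * _)).
apply: eq_bigr => M2; rewrite inE => /andP[pM2 _].
have [uv' st'] : u <> v /\ s <> t by split; apply/eqP.
by rewrite (insert_edge_comm pM2 uv' (nesym su) (nesym tu) (nesym sv) (nesym tv) st').
Qed.

Lemma sum_back_step B u v f : matching B -> [set u; v] \in B -> u != v ->
  \sum_(M in perfect_ext B) back_step B u v f M =
  step_weight B * \sum_(M2 in perfect_ext (B :\ [set u; v])) f M2.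
Proof.
move=> mB uvB uv; rewrite -mulr_sumr exchange_big /=; congr (_ * _).
apply: eq_bigr => M2 M2B; rewrite (bigD1 (insert_edge u v M2)) /=; last exact: insert_edge_ext.
rewrite eqxx mul1r big1 ?addr0 // => M /andP[_ /negbTE].
by rewrite eq_sym => ->; rewrite mul0r.
Qed.

Lemma back_step1 B u v M : matching B -> [set u; v] \in B -> u != v ->
  M \in perfect_ext B -> back_step B u v (fun=> 1) M = 1.
Proof.
move=> mB uvB uv; rewrite inE => /andP[pM sBM].
rewrite /back_step (sum_insert_edge_fiber mB uvB uv pM sBM) sumr_const.
rewrite (card_uncovered pM sBM) (card_setD_perfect pM sBM) /step_weight.
by rewrite addrC -(natrD _ _ 1) addn1 mulVf // pnatr_eq0.
Qed.

Lemma card_perfect_ext B u v : matching B -> [set u; v] \in B -> u != v ->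
  #|perfect_ext B|%:R = step_weight B * #|perfect_ext (B :\ [set u; v])|%:R.
Proof.
move=> mB uvB uv; rewrite -!sum1_card !natr_sum -(sum_back_step (fun=> 1)) //.
by apply: eq_bigr => M MB; rewrite back_step1.
Qed.

End BackStep.

Lemma sum_eq_mem (T : finType) (P : {set T}) (N : T) :
  \sum_(M in P) ((N == M)%:R : rat) = (N \in P)%:R.
Proof.
have [NP|NP] := boolP (N \in P); last first.
  by rewrite big1 // => M MP; case: eqP => // NM; rewrite NM MP in NP.
rewrite (bigD1 N) //= eqxx big1 ?addr0 // => M /andP[_ /negbTE].
by rewrite eq_sym => ->.
Qed.

Section ProcedureRA.
Variable V : finType.
Variables (A : {set {set V}}) (pick : {set {set V}} -> {set {set V}} -> V * V).
Hypothesis mA : matching A.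
Hypothesis pickP : forall A' M' : {set {set V}}, A' \subset A -> A' != set0 ->
  [set (pick A' M').1; (pick A' M').2] \in A'.

Lemma edge_neq (B : {set {set V}}) (u v : V) : B \subset A -> [set u; v] \in B -> u != v.
Proof. by move=> sBA uvB; apply/set2_neq/(matching_card (matchingS sBA mA)). Qed.

Lemma rA_back_step_pick k (B M N : {set {set V}}) :
  B \subset A -> B != set0 -> M \in perfect_ext B ->
  rA pick k.+1 B M N = back_step B (pick B M).1 (pick B M).2
    (fun M2 => rA pick k (B :\ [set (pick B M).1; (pick B M).2]) M2 N) M.
Proof.
move=> sBA B0; rewrite inE => /andP[pM sBM]; have uvB := pickP M sBA B0.
by rewrite rA_step // stepE // ?(matchingS sBA mA) ?(edge_neq sBA uvB).
Qed.

(* By commutation of the steps, any edge of B may be processed first. *)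
Lemma rA_back_step k (B M N : {set {set V}}) (u v : V) :
  #|B| = k.+1 -> B \subset A -> [set u; v] \in B -> M \in perfect_ext B ->
  rA pick k.+1 B M N = back_step B u v (fun M2 => rA pick k (B :\ [set u; v]) M2 N) M.
Proof.
elim: k B M N u v => [|k IH] B M N u v cardB sBA uvB MB.
all: have B0 : B != set0 by apply/set0Pn; exists [set u; v].
all: have pB := pickP M sBA B0; rewrite rA_back_step_pick //.
all: set u' := (pick B M).1 in pB *; set v' := (pick B M).2 in pB *.
all: have [uvE|uvN] := eqVneq [set u'; v'] [set u; v];
  first by rewrite uvE (back_step_set2 _ _ _ (edge_neq sBA uvB) uvE).
  move/eqP/cards1P: cardB => [b bE].
  by move: uvB pB uvN; rewrite bE !inE => /eqP-> /eqP->; rewrite eqxx.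
have mB := matchingS sBA mA.
have sBA' (b : {set V}) : B :\ b \subset A by apply: subset_trans sBA; apply: subsetDl.
have cardB' b : b \in B -> #|B :\ b| = k.+1 by move=> bB; rewrite cardsD1_in // cardB subn1.
have pBuv : [set u'; v'] \in B :\ [set u; v] by rewrite !inE uvN.
have uvBp : [set u; v] \in B :\ [set u'; v'] by rewrite !inE eq_sym uvN.
rewrite (eq_back_step (g := back_step (B :\ [set u'; v']) u v
           (fun M3 => rA pick k (B :\ [set u'; v'] :\ [set u; v]) M3 N))); last first.
  by move=> M2 M2B; apply: IH; rewrite ?cardB'.
rewrite [RHS](eq_back_step (g := back_step (B :\ [set u; v]) u' v'
           (fun M3 => rA pick k (B :\ [set u; v] :\ [set u'; v']) M3 N))); last first.
  by move=> M2 M2B; apply: IH; rewrite ?cardB'.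
by rewrite back_stepC 1?setD1C // ?(edge_neq sBA pB) ?(edge_neq sBA uvB).
Qed.

Lemma sum_rA k (B N : {set {set V}}) : B \subset A -> #|B| = k ->
  (\sum_(M in perfect_ext B) rA pick k B M N) * #|perfect_ext (set0 : {set {set V}})|%:R =
  #|perfect_ext B|%:R * (perfect N)%:R.
Proof.
elim: k B => [|k IH] B sBA cardB.
  by move/cards0_eq: cardB => ->; rewrite /= sum_eq_mem inE sub0set andbT mulrC.
have B0 : B != set0 by apply/eqP => B0; rewrite B0 cards0 in cardB.
have uvB := pickP set0 sBA B0.
set u := (pick B set0).1 in uvB *; set v := (pick B set0).2 in uvB *.
have mB := matchingS sBA mA; have uv := edge_neq sBA uvB.
have sBA' : B :\ [set u; v] \subset A by apply: subset_trans sBA; apply: subsetDl.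
have cardB' : #|B :\ [set u; v]| = k by rewrite cardsD1_in // cardB subn1.
under eq_bigr => M MB do rewrite (rA_back_step _ cardB sBA uvB MB).
by rewrite sum_back_step // -mulrA IH // mulrA -card_perfect_ext.
Qed.

Lemma rA_eq0_new_edge k (B M N : {set {set V}}) (e : {set V}) :
  B \subset A -> e \in N -> e \notin M -> {in e, forall x, ~~ covered A x} ->
  rA pick k B M N = 0.
Proof.
elim: k B M => [|k IH] B M sBA eN eM eA.
  by rewrite /=; case: eqP => // NM; move: eM; rewrite -NM eN.
have [->|B0] := eqVneq B set0.
  by rewrite /= eqxx; case: eqP => // NM; move: eM; rewrite -NM eN.
rewrite rA_step // /step; have uvB := pickP M sBA B0.
set u := (pick B M).1 in uvB *; set v := (pick B M).2 in uvB *.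
have sBA' : B :\ [set u; v] \subset A by apply: subset_trans sBA; apply: subsetDl.
case: eqP => _; first exact: IH.
apply: big1 => e0 _; apply: big1 => x _; apply: big1 => y _.
rewrite (IH _ M) // (IH _ (swapM M u v x y)) ?mulr0 ?addr0 ?mulr0 //.
apply: contraNN (eM) => eS; apply: contraT => eM'.
have uvA w : w \in [set u; v] -> covered A w by apply/covered_mem/(subsetP sBA _ uvB).
by case/orP: (swapM_new_edge eS eM') => /eA; rewrite uvA ?set21 ?set22.
Qed.

Lemma rA_uniform (N : {set {set V}}) :
  (\sum_(M in perfect_ext A) rA pick #|A| A M N) / #|perfect_ext A|%:R =
  (perfect N)%:R / #|perfect_ext (set0 : {set {set V}})|%:R.
Proof.
have sumA := sum_rA N (subxx A) (erefl #|A|).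
have [P0|P0] := eqVneq (perfect_ext (set0 : {set {set V}})) set0.
  have /eqP PA : perfect_ext A == set0.
    by rewrite -subset0 -P0; apply/subsetP => M; rewrite !inE sub0set => /andP[->].
  by rewrite PA P0 cards0 !invr0 !mulr0.
have PA : #|perfect_ext A|%:R != 0 :> rat.
  by rewrite pnatr_eq0 cards_eq0 perfect_ext_neq0.
rewrite -cards_eq0 -(pnatr_eq0 rat) in P0.
by apply: (mulIf P0); rewrite mulrAC sumA; field; rewrite PA P0.
Qed.

Lemma rA_new_edge_covered (M N : {set {set V}}) (e : {set V}) :
  rA pick #|A| A M N != 0 -> e \in N -> e \notin M -> exists2 x, x \in e & covered A x.
Proof.
move=> rA0 eN eM; have [/exists_inP[x xe xA]|eA] := boolP [exists x in e, covered A x].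
  by exists x.
move: rA0; rewrite (rA_eq0_new_edge #|A| (subxx A) eN eM) ?eqxx // => x xe.
by apply: contra eA => xA; apply/exists_inP; exists x.
Qed.

End ProcedureRA.

Theorem mainTheorem14 (n : nat) (A : {set {set 'I_(2 * n)}})
  (pick : {set {set 'I_(2 * n)}} -> {set {set 'I_(2 * n)}} -> 'I_(2 * n) * 'I_(2 * n)) :
  matching A ->
  (forall A' M' : {set {set 'I_(2 * n)}}, A' \subset A -> A' != set0 ->
      [set (pick A' M').1; (pick A' M').2] \in A') ->
  [/\ (forall N : {set {set 'I_(2 * n)}},
         \sum_(M : {set {set 'I_(2 * n)}} | perfect M && (A \subset M))
            rA pick #|A| A M N / #|[set M : {set {set 'I_(2 * n)}} | perfect M && (A \subset M)]|%:R
         = (perfect N)%:R / #|[set M : {set {set 'I_(2 * n)}} | perfect M]|%:R),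
      (forall (M N : {set {set 'I_(2 * n)}}) (e : {set 'I_(2 * n)}),
         perfect M -> A \subset M -> rA pick #|A| A M N != 0 ->
         e \in N -> e \notin M -> exists2 x, x \in e & covered A x)
    & (forall M N B : {set {set 'I_(2 * n)}},
         perfect M -> A \subset M -> matching (A :|: B) -> ~~ (B \subset M) ->
         rA pick #|A| A M N != 0 -> ~~ (B \subset N))].
Proof.
move=> mA pickP; split=> [N|M N e _ _ rA0 eN eM|M N B pM sAM mAB BM rA0].
- rewrite -mulr_suml (eq_bigl (mem (perfect_ext A))); last by move=> M; rewrite /= inE.
  rewrite (rA_uniform mA pickP); congr (_ / _%:R).
  by apply: eq_card => M; rewrite !inE sub0set andbT.
- exact (rA_new_edge_covered pickP rA0 eN eM).
apply/negP => BN; have [b bB bM] := subsetPn BM.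
have [x xb /exists_inP[a aA xa]] := rA_new_edge_covered pickP rA0 (subsetP BN _ bB) bM.
have aAB : a \in A :|: B by rewrite inE aA.
have bAB : b \in A :|: B by rewrite inE bB orbT.
have ab := matching_edge_eq mAB aAB bAB xa xb.
by move: bM; rewrite -ab (subsetP sAM _ aA).
Qed.
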